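(* Let $F$ be a Ferrers diagram and let $(x,y)\in\mathbb{N}^2$ with $x>1$, $y>1$ and $(x,y)\notin F$. Then the divisor $D_{x,y}$ on $R(F)$ has positive rank.
   Context: $\mathbb{N}=\{1,2,3,\dots\}$. A Ferrers diagram is a finite subset $F\subset\mathbb{N}^2$ such that whenever $(x,y)\in F$, either $x=1$ or $(x-1,y)\in F$, and either $y=1$ or $(x,y-1)\in F$; $x$ is the column index and $y$ the row index. The Ferrers rook graph $R(F)$ is the simple graph with vertex set $F$ in which distinct $(x,y),(x',y')$ are adjacent iff $x=x'$ or $y=y'$. For $(x,y)\in\mathbb{N}^2$, $D_{x,y}=\sum_{(x',y')\in F,\ x'\neq x,\ y'\neq y}(x',y')$, i.e. one chip on each vertex of $F$ not in column $x$ and not in row $y$. Divisors on a graph: functions $D:V\to\mathbb{Z}$; firing a vertex $v$ means $v$ loses $\deg(v)$ chips and each neighbor gains one; divisors are equivalent if related by a sequence of firings; $\vert D\vert$ is the set of effective (nonnegative) divisors equivalent to $D$; $D$ has positive rank if for every vertex $v$ some $D'\in\vert D\vert$ has $D'(v)>0$. *)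

From HB Require Import structures.
From mathcomp Require Import all_boot all_order all_algebra.
From mathcomp Require Import finmap.
From Stdlib Require Import Relations.
Set Implicit Arguments. Unset Strict Implicit. Unset Printing Implicit Defensive.
Import Order.TTheory GRing.Theory Num.Theory.
Local Open Scope ring_scope.

Section ChipFiring.
Variables (V : finType) (adj : rel V).

Definition divisor := {ffun V -> int}.

Definition deg (v : V) : nat := #|[set w | adj v w]|.

Definition fire (v : V) (D : divisor) : divisor :=
  [ffun w => if w == v then D w - (deg v)%:Z
             else if adj v w then D w + 1 else D w].

Definition fire_step (D D' : divisor) : Prop := exists v, D' = fire v D.

Definition div_equiv (D D' : divisor) : Prop :=
  clos_refl_sym_trans divisor fire_step D D'.

Definition effective (D : divisor) : Prop := forall v, (0 <= D v)%R.

Definition positive_rank (D : divisor) : Prop :=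
  forall v : V, exists D' : divisor,
    div_equiv D D' /\ effective D' /\ (0 < D' v)%R.

End ChipFiring.

Local Open Scope fset_scope.

(* N = {1,2,...}; x is the column index (first coordinate), y the row index *)
Definition ferrers (F : {fset nat * nat}) : Prop :=
  forall p, p \in F ->
    [/\ 1 <= p.1, 1 <= p.2,
        p.1 = 1 \/ (p.1.-1, p.2) \in F
      & p.2 = 1 \/ (p.1, p.2.-1) \in F]%N.

Definition rook_adj (F : {fset nat * nat}) : rel F :=
  fun u v => (u != v) && (((val u).1 == (val v).1) || ((val u).2 == (val v).2)).

Definition Dxy (F : {fset nat * nat}) (x y : nat) : divisor F :=
  [ffun v : F => if ((val v).1 != x) && ((val v).2 != y) then 1%:Z else 0%:Z].

From Stdlib Require Import Relations.
From mathcomp Require Import all_boot all_order all_algebra zify finmap.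
Set Implicit Arguments. Unset Strict Implicit. Unset Printing Implicit Defensive.
Import GRing.Theory Num.Theory.
Local Open Scope ring_scope.

(* Fire every vertex off column x at once.  A vertex off column x has at most
   one neighbour in column x, namely the vertex of column x in its own row,
   and that vertex can only exist off row y, where D_{x,y} puts a chip: so no
   vertex goes into debt.  Each vertex of column x gains a chip from the
   vertex of column 1 in its row, which lies in F because F is a Ferrers
   diagram and x > 1.  Row y is symmetric, and every other vertex already
   carries a chip of D_{x,y}. *)

Section SetFiring.
Variables (V : finType) (adj : rel V).
Hypotheses (adj_irr : irreflexive adj) (adj_sym : symmetric adj).

Definition neighbors (v : V) : {set V} := [set w | adj v w].

Definition fire_seq (s : seq V) (D : divisor V) : divisor V :=
  foldr (@fire V adj) D s.

Definition fire_set (S : {set V}) (D : divisor V) : divisor V :=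
  fire_seq (enum S) D.

Lemma div_equiv_fire_seq (s : seq V) (D : divisor V) :
  div_equiv adj D (fire_seq s D).
Proof.
elim: s => [|v s IH] /=; first exact: rst_refl.
by apply: rst_trans IH _; apply: rst_step; exists v.
Qed.

Lemma div_equiv_fire_set (S : {set V}) (D : divisor V) :
  div_equiv adj D (fire_set S D).
Proof. exact: div_equiv_fire_seq. Qed.

Lemma fire_seqE (s : seq V) (D : divisor V) (w : V) : fire_seq s D w =
  D w - (count_mem w s * #|neighbors w|)%N%:Z + (count (adj w) s)%:Z.
Proof.
elim: s => [|v s IH] /=; first by rewrite mul0n subr0 addr0.
rewrite ffunE IH; case: eqP => [->|/eqP nwv].
  by rewrite eqxx adj_irr /deg -/(neighbors v) /=; lia.
by rewrite eq_sym (negbTE nwv) (adj_sym v w) /=; case: (adj w v) => /=; lia.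
Qed.

Lemma fire_setE (S : {set V}) (D : divisor V) (w : V) : fire_set S D w =
  D w - ((w \in S) * #|neighbors w|)%N%:Z + #|neighbors w :&: S|%:Z.
Proof.
rewrite /fire_set fire_seqE count_uniq_mem ?enum_uniq // mem_enum.
congr (_ + _%:Z); rewrite cardE -size_filter /enum_mem -filter_predI.
by congr size; apply: eq_filter => u; rewrite !inE andbC.
Qed.

Lemma fire_set_in (S : {set V}) (D : divisor V) (w : V) :
  w \in S -> fire_set S D w = D w - #|neighbors w :\: S|%:Z.
Proof.
move=> wS; rewrite fire_setE wS -(cardsID S (neighbors w)); lia.
Qed.

Lemma fire_set_notin (S : {set V}) (D : divisor V) (w : V) :
  w \notin S -> fire_set S D w = D w + #|neighbors w :&: S|%:Z.
Proof. by move=> /negbTE wS; rewrite fire_setE wS mul0n subr0. Qed.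

End SetFiring.

Section ColumnFiring.
Variables (V : finType) (adj : rel V) (col row : V -> nat) (a b : nat).
Hypothesis adjE :
  forall u v, adj u v = (u != v) && ((col u == col v) || (row u == row v)).
Hypothesis coord_inj : forall u v, col u = col v -> row u = row v -> u = v.
Hypothesis no_corner : forall w, col w = a -> row w != b.
Hypothesis row_leaves_column :
  forall w, col w = a -> exists u, col u != a /\ row u = row w.

Definition cross_divisor : divisor V :=
  [ffun w => if (col w != a) && (row w != b) then 1 else 0].

Let S : {set V} := [set w | col w != a].

Let adj_irr : irreflexive adj.
Proof. by move=> u; rewrite adjE eqxx. Qed.

Let adj_sym : symmetric adj.
Proof.
by move=> u v; rewrite !adjE eq_sym (eq_sym (col u)) (eq_sym (row u)).
Qed.

Lemma column_neighbor (w u : V) :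
  w \in S -> u \in neighbors adj w :\: S -> col u = a /\ row u = row w.
Proof.
rewrite !inE negbK => cwa /andP[/eqP cua]; rewrite adjE cua eq_sym (negbTE cwa).
by move=> /andP[_ /eqP]; split.
Qed.

Lemma card_column_neighbors_le (w : V) :
  w \in S -> (#|neighbors adj w :\: S| <= (row w != b))%N.
Proof.
move=> wS; case: (set_0Vmem (neighbors adj w :\: S)) => [->|[u Nu]].
  by rewrite cards0.
have [cua rwu] := column_neighbor wS Nu.
have -> : row w != b by rewrite -rwu no_corner.
rewrite /= -(cards1 u); apply/subset_leq_card/subsetP => u' Nu'; rewrite inE.
have [cu'a ru'w] := column_neighbor wS Nu'.
by apply/eqP/coord_inj; rewrite ?cua ?cu'a ?rwu ?ru'w.
Qed.

Lemma card_neighbors_off_column_gt0 (w : V) :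
  col w = a -> (0 < #|neighbors adj w :&: S|)%N.
Proof.
move=> cwa; have [u [cua ruw]] := row_leaves_column cwa.
apply/card_gt0P; exists u; rewrite !inE cua andbT adjE ruw eqxx orbT andbT.
by apply: contraNneq cua => <-; rewrite cwa.
Qed.

Lemma fire_off_column_effective : effective (fire_set adj S cross_divisor).
Proof.
move=> w; case: (boolP (w \in S)) => wS.
  rewrite fire_set_in // ffunE; move: (wS) (card_column_neighbors_le wS).
  by rewrite inE => ->; case: (row w != b) => /=; lia.
by rewrite fire_set_notin // ffunE; case: ifP => _; lia.
Qed.

Lemma fire_off_column_gt0 (v : V) :
  col v = a -> 0 < fire_set adj S cross_divisor v.
Proof.
move=> cva; have vS : v \notin S by rewrite inE cva negbK.
rewrite fire_set_notin // ffunE cva eqxx /= add0r ltz_nat.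
exact: card_neighbors_off_column_gt0.
Qed.

Lemma cross_divisor_column_chip (v : V) : col v = a ->
  exists D', div_equiv adj cross_divisor D' /\ effective D' /\ 0 < D' v.
Proof.
move=> cva; exists (fire_set adj S cross_divisor); split; last split.
- exact: div_equiv_fire_set.
- exact: fire_off_column_effective.
- exact: fire_off_column_gt0.
Qed.

End ColumnFiring.

Local Close Scope ring_scope.
Local Open Scope fset_scope.

Section Ferrers.
Variable F : {fset nat * nat}.
Hypothesis F_ferrers : ferrers F.

Lemma ferrers_col1 a b : (a, b) \in F -> (1, b) \in F.
Proof.
elim: a => [|a IH] abF; first by case: (F_ferrers abF).
have [_ _ [/= /succn_inj a0 | /IH //] _] := F_ferrers abF.
by rewrite a0 in abF.
Qed.

Lemma ferrers_row1 a b : (a, b) \in F -> (a, 1) \in F.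
Proof.
elim: b => [|b IH] abF; first by case: (F_ferrers abF).
have [_ _ _ [/= /succn_inj b0 | /IH //]] := F_ferrers abF.
by rewrite b0 in abF.
Qed.

Lemma ferrers_coord_inj (u v : F) :
  (val u).1 = (val v).1 -> (val u).2 = (val v).2 -> u = v.
Proof.
move=> eq1 eq2; apply: val_inj.
by rewrite [val u]surjective_pairing eq1 eq2 -surjective_pairing.
Qed.

Variables (x y : nat).
Hypothesis xy_notin : (x, y) \notin F.

Lemma Dxy_column_chip (v : F) : (1 < x)%N -> (val v).1 = x ->
  exists D', div_equiv (@rook_adj F) (Dxy F x y) D' /\
             effective D' /\ (0 < D' v)%R.
Proof.
move=> x_gt1 vx.
have DxyE :
    Dxy F x y = cross_divisor (fun u : F => (val u).1) (fun u => (val u).2) x y.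
  by apply/ffunP => w; rewrite !ffunE.
rewrite DxyE; apply: cross_divisor_column_chip vx => //.
- exact: ferrers_coord_inj.
- move=> w wx; apply: contraNneq xy_notin => wy.
  by rewrite -wx -wy -surjective_pairing (valP w).
- move=> w wx; have w1F : (1, (val w).2) \in F.
    by apply: (@ferrers_col1 (val w).1); rewrite -surjective_pairing (valP w).
  by exists [` w1F]; split=> //=; lia.
Qed.

Lemma Dxy_row_chip (v : F) : (1 < y)%N -> (val v).2 = y ->
  exists D', div_equiv (@rook_adj F) (Dxy F x y) D' /\
             effective D' /\ (0 < D' v)%R.
Proof.
move=> y_gt1 vy.
have DxyE :
    Dxy F x y = cross_divisor (fun u : F => (val u).2) (fun u => (val u).1) y x.
  by apply/ffunP => w; rewrite !ffunE andbC.
rewrite DxyE; apply: cross_divisor_column_chip vy => //.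
- by move=> u w; rewrite /rook_adj orbC.
- by move=> u w eq2 eq1; apply: ferrers_coord_inj.
- move=> w wy; apply: contraNneq xy_notin => wx.
  by rewrite -wx -wy -surjective_pairing (valP w).
- move=> w wy; have w1F : ((val w).1, 1) \in F.
    by apply: (@ferrers_row1 _ (val w).2); rewrite -surjective_pairing (valP w).
  by exists [` w1F]; split=> //=; lia.
Qed.

End Ferrers.

Theorem proposition3p1 (F : {fset nat * nat}) (x y : nat) :
  ferrers F -> (1 < x)%N -> (1 < y)%N -> (x, y) \notin F ->
  positive_rank (@rook_adj F) (Dxy F x y).
Proof.
move=> F_ferrers x_gt1 y_gt1 xy_notin v.
have [vx | vx] := eqVneq (val v).1 x; first exact: Dxy_column_chip.
have [vy | vy] := eqVneq (val v).2 y; first exact: Dxy_row_chip.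
exists (Dxy F x y); split; first exact: rst_refl.
by split=> [w|]; rewrite ffunE ?vx ?vy //; case: ifP.
Qed.
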